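(* Let $p\ge1$ and let $F:\mathbb{R}\to E^p$ be $D$-continuous. Then for every compact set $U\subset\mathbb{R}$, the set $F(U)=\{F(t): t\in U\}$ is uniformly-support-bounded, i.e. there is a compact set $K\subset\mathbb{R}^p$ such that $[F(t)]_0\subset K$ for all $t\in U$.
   Context: A fuzzy subset of $\mathbb{R}^p$ is a function $u:\mathbb{R}^p\to[0,1]$. Its $\alpha$-cut is $[u]_\alpha=\{x\in\mathbb{R}^p: u(x)\ge\alpha\}$ for $\alpha\in(0,1]$, and $[u]_0=\overline{\{x\in\mathbb{R}^p: u(x)>0\}}$. The set $E^p$ of $p$-dimensional fuzzy numbers consists of all fuzzy subsets $u$ of $\mathbb{R}^p$ such that $[u]_\alpha$ is a nonempty compact convex subset of $\mathbb{R}^p$ for every $\alpha\in[0,1]$. The sendograph of $u\in E^p$ is $\mathrm{send}\,u=\{(x,\alpha)\in[u]_0\times[0,1]: u(x)\ge\alpha\}\subset\mathbb{R}^{p+1}$. For nonempty compact $U,V\subset\mathbb{R}^{p+1}$ (with the Euclidean metric $d$), the Hausdorff metric is $H(U,V)=\max\{H^*(U,V),H^*(V,U)\}$ with $H^*(U,V)=\sup_{a\in U}\inf_{b\in V}d(a,b)$. The sendograph metric on $E^p$ is $D(u,v)=H(\mathrm{send}\,u,\mathrm{send}\,v)$. A function $F:\mathbb{R}\to E^p$ is $D$-continuous if $\lim_{y\to x}D(F(y),F(x))=0$ for every $x\in\mathbb{R}$. *)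

From HB Require Import structures.
From mathcomp Require Import all_boot all_order all_algebra.
From mathcomp Require Import all_classical all_reals all_analysis.
Set Implicit Arguments. Unset Strict Implicit. Unset Printing Implicit Defensive.
Import Order.TTheory GRing.Theory Num.Theory.
Import numFieldNormedType.Exports.
Local Open Scope classical_set_scope.
Local Open Scope ring_scope.

Section FuzzyDefs.
Variables (R : realType) (p : nat).

Definition alpha_cut (u : 'rV[R]_p -> R) (a : R) : set 'rV[R]_p :=
  [set x | a <= u x].

Definition cut0 (u : 'rV[R]_p -> R) : set 'rV[R]_p :=
  closure [set x | 0 < u x].

Definition level (u : 'rV[R]_p -> R) (a : R) : set 'rV[R]_p :=
  if a == 0 then cut0 u else alpha_cut u a.

Definition convex_set_rV (A : set 'rV[R]_p) : Prop :=
  forall x y t, A x -> A y -> 0 <= t <= 1 -> A (t *: x + (1 - t) *: y).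

Definition fuzzy_number (u : 'rV[R]_p -> R) : Prop :=
  (forall x, 0 <= u x <= 1) /\
  (forall a, 0 <= a <= 1 ->
     level u a !=set0 /\ compact (level u a) /\ convex_set_rV (level u a)).

Definition send (u : 'rV[R]_p -> R) : set ('rV[R]_p * R) :=
  [set z | cut0 u z.1 /\ 0 <= z.2 <= 1 /\ z.2 <= u z.1].

Definition edist (a b : 'rV[R]_p * R) : R :=
  Num.sqrt (\sum_(i < p) (a.1 ord0 i - b.1 ord0 i) ^+ 2 + (a.2 - b.2) ^+ 2).

Definition hausdorff_star (U V : set ('rV[R]_p * R)) : R :=
  sup [set r | exists2 a, U a & r = inf [set s | exists2 b, V b & s = edist a b]].

Definition hausdorff (U V : set ('rV[R]_p * R)) : R :=
  Num.max (hausdorff_star U V) (hausdorff_star V U).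

Definition Dsend (u v : 'rV[R]_p -> R) : R := hausdorff (send u) (send v).

Definition D_continuous (F : R -> 'rV[R]_p -> R) : Prop :=
  forall x : R, Dsend (F y) (F x) @[y --> x^'] --> 0.

End FuzzyDefs.

From Pilot Require Import Defs.
From HB Require Import structures.
From mathcomp Require Import all_boot all_order all_algebra.
From mathcomp Require Import all_classical all_reals all_analysis.
Set Implicit Arguments. Unset Strict Implicit.
Import Order.TTheory GRing.Theory Num.Theory.
Import numFieldNormedType.Exports.
Local Open Scope classical_set_scope.
Local Open Scope ring_scope.

(** If [D(F y, F x) < 1] then every point [z] of [[F y]_0] lies within distance
  [1] of [[F x]_0]: the point [(z, 0)] of the sendograph of [F y] is at
  distance less than [1] from the sendograph of [F x], and projecting to
  [R^p] does not increase distances. Hence the supports are uniformly bounded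
  on a neighbourhood of every [x], and compactness of [U] turns these local
  bounds into a single one. *)

Section RowNorm.
Variables (R : realType) (p : nat).

Lemma rV_entry_norm_le (x : 'rV[R]_p) i : `|x ord0 i| <= `|x|.
Proof.
rewrite [leRHS]/Num.norm /= mx_normrE; apply/bigmax_geP; right => /=.
by exists (ord0, i).
Qed.

Lemma rV_norm_le (x : 'rV[R]_p) c :
  0 <= c -> (forall i, `|x ord0 i| <= c) -> `|x| <= c.
Proof.
move=> c0 xc; rewrite [leLHS]/Num.norm /= mx_normrE; apply/bigmax_leP.
by split=> // -[i j] _ /=; rewrite (ord1 i).
Qed.

End RowNorm.

Section Edist.
Variables (R : realType) (p : nat).
Implicit Types a b : 'rV[R]_p * R.

Lemma edist_ge0 a b : 0 <= Defs.edist a b.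
Proof. exact: sqrtr_ge0. Qed.

Lemma norm_fst_sub_le_edist a b : `|a.1 - b.1| <= Defs.edist a b.
Proof.
apply: rV_norm_le => [|i]; first exact: edist_ge0.
have sum_ge0 (P : pred 'I_p) :
    0 <= \sum_(j < p | P j) (a.1 ord0 j - b.1 ord0 j) ^+ 2.
  by apply: sumr_ge0 => j _; exact: sqr_ge0.
rewrite !mxE /Defs.edist -sqrtr_sqr ler_sqrt ?addr_ge0 ?sqr_ge0 //.
by rewrite (bigD1 i) //= -addrA lerDl addr_ge0 ?sqr_ge0.
Qed.

Lemma edist_le_sqrt a b c e : `|a.1 - b.1| <= c -> `|a.2 - b.2| <= e ->
  Defs.edist a b <= Num.sqrt (p%:R * c ^+ 2 + e ^+ 2).
Proof.
move=> abc abe; have c0 := le_trans (normr_ge0 _) abc.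
have e0 := le_trans (normr_ge0 _) abe.
rewrite ler_sqrt ?addr_ge0 ?mulr_ge0 ?sqr_ge0 //.
apply: lerD; last by rewrite -real_normK ?num_real // lerXn2r ?nnegrE.
apply: le_trans (_ : _ <= \sum_(i < p) c ^+ 2) _; last first.
  by rewrite sumr_const card_ord mulr_natl.
apply: ler_sum => i _.
rewrite -real_normK ?num_real // lerXn2r ?nnegrE //.
apply: le_trans abc; have := rV_entry_norm_le (a.1 - b.1) i.
by rewrite !mxE.
Qed.

End Edist.

Section Sendograph.
Variables (R : realType) (p : nat).
Implicit Types u v : 'rV[R]_p -> R.

Lemma fuzzy_number_cut0 u :
  fuzzy_number u -> compact (cut0 u) /\ cut0 u !=set0.
Proof.
case=> _ /(_ 0); rewrite lexx ler01 /level eqxx => /(_ isT).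
by case=> ne [cpt _].
Qed.

Lemma cut0_bounded u :
  fuzzy_number u -> exists B, cut0 u `<=` [set z | `|z| <= B].
Proof.
move=> /fuzzy_number_cut0[/compact_bounded[M [_ HM]] _].
by exists (M + 1) => z; apply: HM; rewrite ltrDl.
Qed.

Lemma send_cut0 u z : fuzzy_number u -> cut0 u z -> send u (z, 0).
Proof. by case=> u01 _ uz; split=> //=; rewrite lexx ler01 (andP (u01 z)).1. Qed.

Lemma send_edist_bounded u v : fuzzy_number u -> fuzzy_number v ->
  exists M, forall a, send u a -> exists2 b, send v b & Defs.edist a b <= M.
Proof.
move=> fu fv; have [Bu uBu] := cut0_bounded fu; have [Bv vBv] := cut0_bounded fv.
have [_ [z0 vz0]] := fuzzy_number_cut0 fv.
exists (Num.sqrt (p%:R * (Bu + Bv) ^+ 2 + 1 ^+ 2)) => -[z a] [uz [/andP[a0 a1] _]].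
exists (z0, 0); first exact: send_cut0.
apply: edist_le_sqrt => /=.
  by apply: le_trans (ler_normB _ _) _; apply: lerD; [exact: uBu | exact: vBv].
by rewrite subr0 ger0_norm.
Qed.

(* Without the bound [M] the [sup] in [hausdorff_star] would be a junk value. *)
Lemma inf_edist_le_hausdorff_star (U V : set ('rV[R]_p * R)) a M : U a ->
  (forall a, U a -> exists2 b, V b & Defs.edist a b <= M) ->
  inf [set s | exists2 b, V b & s = Defs.edist a b] <= hausdorff_star U V.
Proof.
move=> Ua UV; apply: sup_upper_bound; last by exists a.
split; first by exists (inf [set s | exists2 b, V b & s = Defs.edist a b]), a.
exists M => _ [a' /UV[b Vb a'bM] ->]; apply: le_trans a'bM.
by apply: ge_inf; [exists 0 => _ [b' _ ->]; exact: edist_ge0 | exists b].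
Qed.

Lemma cut0_near_Dsend u v z r : fuzzy_number u -> fuzzy_number v ->
  Dsend u v < r -> cut0 u z -> exists2 b, cut0 v b & `|z - b| < r.
Proof.
move=> fu fv uvr uz; have [M uvM] := send_edist_bounded fu fv.
set E := [set s | exists2 b, send v b & s = Defs.edist (z, 0) b].
have E_neq0 : E !=set0.
  have [_ [z0 vz0]] := fuzzy_number_cut0 fv.
  by exists (Defs.edist (z, 0) (z0, 0)), (z0, 0); first exact: send_cut0.
have Er : inf E < r.
  apply: le_lt_trans uvr; rewrite /Dsend /hausdorff le_max; apply/orP; left.
  exact: (inf_edist_le_hausdorff_star (send_cut0 fu uz) uvM).
have [_ [[b1 b2] [vb1 _] ->] zbr] := inf_lt E_neq0 Er.
exists b1 => //; apply: le_lt_trans zbr.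
exact: (norm_fst_sub_le_edist (z, 0) (b1, b2)).
Qed.

Lemma cut0_bounded_Dsend u v B r : fuzzy_number u -> fuzzy_number v ->
  Dsend u v < r -> cut0 v `<=` [set z | `|z| <= B] ->
  cut0 u `<=` [set z | `|z| <= B + r].
Proof.
move=> fu fv uvr vB z /(cut0_near_Dsend fu fv uvr)[b /vB vbB zbr] /=.
rewrite -(subrK b z) addrC; apply: le_trans (ler_normD _ _) _.
by rewrite lerD // ltW.
Qed.

End Sendograph.

Lemma cut0_locally_bounded (R : realType) (p : nat) (F : R -> 'rV[R]_p -> R)
    (x : R) :
  (forall t, fuzzy_number (F t)) -> D_continuous F ->
  exists B, \forall y \near x, cut0 (F y) `<=` [set z | `|z| <= B].
Proof.
move=> fF DF; have [B xB] := cut0_bounded (fF x).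
have Dnear : \forall y \near x, y != x -> Dsend (F y) (F x) < 1.
  exact: (cvgr_lt _ (DF x) _ ltr01).
exists (B + 1); near=> y; have [->|yx] := eqVneq y x.
  by move=> z /xB /le_trans; apply; rewrite lerDl.
apply: (cut0_bounded_Dsend (fF y) (fF x) _ xB); move: yx; near: y; exact: Dnear.
Unshelve. all: by end_near.
Qed.

Lemma compact_norm_le (R : realType) (p : nat) (B : R) :
  compact [set z : 'rV[R]_p | `|z| <= B].
Proof.
have -> : [set z : 'rV[R]_p | `|z| <= B] = closed_ball_ Num.norm 0 B.
  by apply/seteqP; split=> z; rewrite /closed_ball_ /= sub0r normrN.
apply: bounded_closed_compact; last exact: closed_closed_ball_.
exists B; split=> [|M BM z]; first exact: num_real.
by rewrite /closed_ball_ /= sub0r normrN => /le_trans; apply; exact: ltW.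
Qed.

Lemma compact_uniform_norm_bound (T : topologicalType) (R : realType)
    (V : normedModType R) (U : set T) (A : T -> set V) :
  compact U ->
  (forall x, U x -> exists B, \forall y \near x, A y `<=` [set z | `|z| <= B]) ->
  exists B, forall t, U t -> A t `<=` [set z | `|z| <= B].
Proof.
move=> /compact_near_coveringP cover locB.
have [|B [_ UB]] := cover R (pinfty_nbhs R)
  (fun B t => A t `<=` [set z | `|z| <= B]) _.
  move=> x /locB[B xB].
  exists (fun y => A y `<=` [set z | `|z| <= B], [set M | B <= M]).
    by split=> //=; apply: nbhs_pinfty_ge; exact: num_real.
  by case=> y M /= [yB BM] z /yB /le_trans; apply.
by exists (B + 1) => t Ut; apply: UB; rewrite ?ltrDl.
Qed.

Unset Implicit Arguments.

Theorem theorem2p2 (R : realType) (p : nat) (hp : (1 <= p)%N)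
  (F : R -> 'rV[R]_p -> R)
  (hF : forall t, fuzzy_number (F t))
  (hD : D_continuous F) :
  forall U : set R, compact U ->
    exists K : set 'rV[R]_p, compact K /\
      (forall t, U t -> cut0 (F t) `<=` K).
Proof.
move=> U cU.
have [B UB] := compact_uniform_norm_bound cU
  (fun x _ => cut0_locally_bounded x hF hD).
by exists [set z | `|z| <= B]; split; [exact: compact_norm_le | exact: UB].
Qed.
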